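(* Let $n$ be a positive integer. There exists a form $F\in\mathbb{Z}[x_1,\ldots,x_n]$ (a polynomial $F\in\mathbb{Z}[x]$ if $n=1$), a prime number $p$, and $M>0$ such that $R(F)$ is dense in $\mathbb{Q}_p$, but $R(F)$ is not dense in $\mathbb{Q}_q$ for every prime $q>M$.
   Context: For $F\in\mathbb{Z}[x_1,\dots,x_n]$, $R(F)=\{F(\overline{x})/F(\overline{y}) : \overline{x},\overline{y}\in\mathbb{Z}^n,\ F(\overline{y})\neq 0\}$, and density is with respect to the $p$-adic (resp. $q$-adic) topology. *)

From HB Require Import structures.
From mathcomp Require Import all_boot all_order all_algebra.
From mathcomp Require Import mpoly.
Set Implicit Arguments. Unset Strict Implicit. Unset Printing Implicit Defensive.
Import Order.TTheory GRing.Theory Num.Theory.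
Local Open Scope ring_scope.

Definition padic_val (p : nat) (r : rat) : int :=
  (logn p `|numq r|%N)%:Z - (logn p `|denq r|%N)%:Z.

Definition padic_abs (p : nat) (r : rat) : rat :=
  if r == 0 then 0 else (p%:R : rat) ^ (- padic_val p r).

Definition ratio_set (n : nat) (F : {mpoly int[n]}) : rat -> Prop :=
  fun r => exists (x y : 'I_n -> int),
    F.@[y] != 0 /\ r = (F.@[x])%:~R / (F.@[y])%:~R.

(* A subset S of Q is dense in Q_p.  Since Q is dense in Q_p, this holds iff
   S is dense in Q for the p-adic absolute value. *)
Definition dense_in_Qp (p : nat) (S : rat -> Prop) : Prop :=
  forall (x eps : rat), 0 < eps -> exists2 s, S s & padic_abs p (s - x) < eps.

From mathcomp Require Import all_boot all_order all_algebra.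
From mathcomp Require Import mpoly.
From mathcomp Require Import zify ring.
Import Order.TTheory GRing.Theory Num.Theory.
Set Implicit Arguments. Unset Strict Implicit. Unset Printing Implicit Defensive.
Local Open Scope ring_scope.

(* Take F(x, y) = y^15 x^10 (x - y)^15 (x - 2y)^6 (x - 3y)^24 (x - 6y)^20.
   For a prime q > 6 the six linear factors are pairwise independent modulo q,
   so all but at most one of them have q-adic valuation m = v_q(gcd(x, y)).
   Hence v_q(F(x, y)) = 90 m + e k with e one of the exponents, a number
   divisible by 6, 10 or 15; no two such numbers are consecutive, while a
   ratio q-adically close to q has valuation 1: R(F) misses a neighbourhood
   of q.  For p = 2, at t = 1 + 2^(i+1) h the value F(t, 1) is 2^(39 + 15 i)
   times h^15 times a unit that is fixed modulo 2^i, and h |-> h^15 permutes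
   the odd residues modulo 2^K, so the unit part of F(t, 1) is arbitrary.
   Dividing by F(8 2^j + 2, 1) or F(4 2^j + 3, 1), of valuations 68 + 6 j and
   63 + 24 j, reaches every valuation congruent to 0 or 1 modulo 3, and
   inverting the ratio reaches the remaining class. *)

Definition zlogn (p : nat) (z : int) : nat := logn p `|z|.

Lemma zlogn0 p : zlogn p 0 = 0%N.
Proof. by rewrite /zlogn logn0. Qed.

Lemma zlognM p a b : prime p -> a != 0 -> b != 0 ->
  zlogn p (a * b) = (zlogn p a + zlogn p b)%N.
Proof. by move=> pp a0 b0; rewrite /zlogn abszM lognM // absz_gt0. Qed.

Lemma zlognX p z e : zlogn p (z ^+ e) = (e * zlogn p z)%N.
Proof. by rewrite /zlogn abszX lognX. Qed.

Lemma zlogn_dvd p t z : prime p -> z != 0 -> (p%:R ^+ t %| z)%Z = (t <= zlogn p z)%N.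
Proof. by move=> pp z0; rewrite dvdzE abszX natz pfactor_dvdn // absz_gt0. Qed.

Lemma zlognDl p x y : prime p -> y != 0 -> (p%:R ^+ (zlogn p y).+1 %| x)%Z ->
  zlogn p (x + y) = zlogn p y.
Proof.
move=> pp y0 dx; have dy : (p%:R ^+ zlogn p y %| y)%Z by rewrite zlogn_dvd.
have ndy : ~~ (p%:R ^+ (zlogn p y).+1 %| y)%Z by rewrite zlogn_dvd // ltnn.
have ndxy : ~~ (p%:R ^+ (zlogn p y).+1 %| x + y)%Z by rewrite rpredDl.
have xy0 : x + y != 0 by apply: contraNneq ndxy => ->; rewrite dvdz0.
apply/eqP; rewrite eqn_leq leqNgt -zlogn_dvd // ndxy -zlogn_dvd //.
by rewrite rpredD // (dvdz_trans (dvdz_exp2l _ (leqnSn _)) dx).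
Qed.

Lemma zlogn_pexpM p n z : prime p -> ~~ (p%:R %| z)%Z -> zlogn p (p%:R ^+ n * z) = n.
Proof.
move=> pp ndz; have z0 : z != 0 by apply: contraNneq ndz => ->; rewrite dvdz0.
have p0 : p%:R != 0 :> int by rewrite pnatr_eq0 -lt0n prime_gt0.
have vz : zlogn p z = 0%N by apply/eqP; move: ndz; rewrite -[p%:R]expr1 zlogn_dvd // -eqn0Ngt.
by rewrite zlognM ?expf_neq0 // zlognX vz /zlogn natz /= logn_prime ?eqxx // muln1 addn0.
Qed.

Lemma zlogn_decomp p z : prime p -> z != 0 ->
  exists2 z', ~~ (p%:R %| z')%Z & z = p%:R ^+ zlogn p z * z'.
Proof.
move=> pp z0; have dz : (p%:R ^+ zlogn p z %| z)%Z by rewrite zlogn_dvd.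
exists (z %/ p%:R ^+ zlogn p z)%Z; last by rewrite mulrC divzK.
apply: contraTN (leqnn (zlogn p z).+1) => /(dvdz_mul (dvdzz (p%:R ^+ zlogn p z))).
by rewrite -exprSr mulrC divzK // zlogn_dvd // ltnn.
Qed.

Lemma padic_val_ratio p (A B : int) : prime p -> A != 0 -> B != 0 ->
  padic_val p (A%:~R / B%:~R) = (zlogn p A)%:Z - (zlogn p B)%:Z.
Proof.
move=> pp A0 B0; set r : rat := _ / _.
have cross : numq r * B = A * denq r.
  apply: (@intr_inj rat); rewrite !intrM; apply/eqP.
  by rewrite -eqr_div ?intr_eq0 ?denq_neq0 // divq_num_den.
have := congr1 (zlogn p) cross; rewrite !zlognM ?denq_neq0 //; last first.
  by rewrite numq_eq0 mulf_neq0 ?invr_eq0 ?intr_eq0.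
rewrite /padic_val -/(zlogn p (numq r)) -/(zlogn p (denq r)); lia.
Qed.

Lemma padic_abs_ratio p (A B : int) : prime p -> A != 0 -> B != 0 ->
  padic_abs p (A%:~R / B%:~R) = p%:R ^ ((zlogn p B)%:Z - (zlogn p A)%:Z).
Proof.
move=> pp A0 B0; rewrite /padic_abs padic_val_ratio // opprB.
by rewrite mulf_eq0 invr_eq0 !intr_eq0 (negbTE A0) (negbTE B0).
Qed.

Lemma padic_abs_ratio_le p (N D : int) k : prime p -> D != 0 ->
  (p%:R ^+ (zlogn p D + k) %| N)%Z -> padic_abs p (N%:~R / D%:~R) <= p%:R ^- k.
Proof.
move=> pp D0; have [->|N0] := eqVneq N 0.
  by rewrite mul0r /padic_abs eqxx invr_ge0 exprn_ge0.
rewrite zlogn_dvd // padic_abs_ratio // exprnN ler_eXz2l ?ltr1n ?prime_gt1 //; lia.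
Qed.

Lemma padic_abs_ratio_lt p (N D : int) k : prime p -> D != 0 ->
  padic_abs p (N%:~R / D%:~R) < p%:R ^- k -> (p%:R ^+ (zlogn p D + k).+1 %| N)%Z.
Proof.
move=> pp D0; have [->|N0] := eqVneq N 0; first by rewrite dvdz0.
rewrite zlogn_dvd // padic_abs_ratio // exprnN ltr_eXz2l ?ltr1n ?prime_gt1 //; lia.
Qed.

Lemma zlogn_ratio_near_p p (A B : int) : prime p -> B != 0 ->
  padic_abs p (A%:~R / B%:~R - p%:R) < p%:R ^- 1 -> zlogn p A = (zlogn p B).+1.
Proof.
move=> pp B0 near; have p0 : p%:R != 0 :> int by rewrite pnatr_eq0 -lt0n prime_gt0.
have vpB : zlogn p (p%:R * B) = (zlogn p B).+1.
  by rewrite zlognM // /zlogn natz /= logn_prime ?eqxx.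
have -> : A = (A - p%:R * B) + p%:R * B by rewrite subrK.
rewrite zlognDl ?mulf_neq0 // vpB.
move: near; have -> : A%:~R / B%:~R - p%:R = (A - p%:R * B)%:~R / B%:~R :> rat.
  by rewrite intrB intrM rmorph_nat; field; rewrite intr_eq0.
by move/padic_abs_ratio_lt; rewrite addn1; apply.
Qed.

Definition lform (c : int * int) (R : zmodType) (x y : R) : R := x *~ c.1 + y *~ c.2.

Definition ldet (c d : int * int) : int := c.1 * d.2 - c.2 * d.1.

Definition prod_lform (s : seq (int * int * nat)) (R : pzRingType) (x y : R) : R :=
  \prod_(c <- s) lform c.1 x y ^+ c.2.

Lemma lformE (c : int * int) (a b : int) : lform c a b = c.1 * a + c.2 * b.
Proof. by rewrite /lform !mulrzz mulrC [b * _]mulrC. Qed.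

Lemma prod_lform_nil (R : pzRingType) (x y : R) : prod_lform [::] x y = 1.
Proof. by rewrite /prod_lform big_nil. Qed.

Lemma prod_lform_cons c s (R : pzRingType) (x y : R) :
  prod_lform (c :: s) x y = lform c.1 x y ^+ c.2 * prod_lform s x y.
Proof. by rewrite /prod_lform big_cons. Qed.

Lemma rmorph_prod_lform (R S : pzRingType) (f : {rmorphism R -> S}) s x y :
  f (prod_lform s x y) = prod_lform s (f x) (f y).
Proof.
by rewrite rmorph_prod; apply: eq_bigr => c _; rewrite rmorphXn rmorphD !rmorphMz.
Qed.

Lemma prod_lform_homog n s d (X Y : {mpoly int[n]}) :
  X \is d.-homog -> Y \is d.-homog -> prod_lform s X Y \is (d * \sum_(c <- s) c.2)%N.-homog.
Proof.
move=> hX hY; elim: s => [|c s IH]; first by rewrite big_nil muln0 prod_lform_nil dhomog1.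
rewrite prod_lform_cons big_cons mulnDr; apply: dhomogM IH; apply: dhomogMn.
by rewrite /lform rpredD // rpredMz.
Qed.

Lemma dvdz_ldet k c d (a b : int) : (k %| lform c a b)%Z -> (k %| lform d a b)%Z ->
  (k %| ldet c d * a)%Z && (k %| ldet c d * b)%Z.
Proof.
rewrite !lformE /ldet => hc hd; apply/andP; split.
  have -> : (c.1 * d.2 - c.2 * d.1) * a =
      d.2 * (c.1 * a + c.2 * b) - c.2 * (d.1 * a + d.2 * b) by ring.
  by rewrite rpredB ?dvdz_mull.
have -> : (c.1 * d.2 - c.2 * d.1) * b =
    c.1 * (d.1 * a + d.2 * b) - d.1 * (c.1 * a + c.2 * b) by ring.
by rewrite rpredB ?dvdz_mull.
Qed.

Section IndependentForms.

Variables (p : nat) (a b : int).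
Hypothesis p_prime : prime p.

(* min (v_p a) (v_p b), taken through the gcd so that it is also right when
   a or b is 0 *)
Local Notation m := (zlogn p (gcdz a b)).

Lemma gcdz_lform_neq0 c : lform c a b != 0 -> gcdz a b != 0.
Proof.
apply: contraNneq => /eqP; rewrite gcdz_eq0 => /andP[/eqP-> /eqP->].
by rewrite lformE !mulr0 addr0.
Qed.

Lemma zlogn_lform_ge c : lform c a b != 0 -> (m <= zlogn p (lform c a b))%N.
Proof.
move=> L0; have g0 := gcdz_lform_neq0 L0.
have /andP[da db] : (p%:R ^+ m %| a)%Z && (p%:R ^+ m %| b)%Z.
  by rewrite -dvdz_gcd zlogn_dvd.
by rewrite -zlogn_dvd // lformE rpredD ?dvdz_mull.
Qed.

Lemma zlogn_lform_pair c d : coprimez p (ldet c d) ->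
  lform c a b != 0 -> lform d a b != 0 ->
  (zlogn p (lform c a b) <= m)%N || (zlogn p (lform d a b) <= m)%N.
Proof.
move=> cop Lc0 Ld0; have g0 := gcdz_lform_neq0 Lc0.
apply/contraT; rewrite negb_or -!ltnNge -!zlogn_dvd // => /andP[dc dd].
have cop' : coprimez (p%:R ^+ m.+1) (ldet c d) by rewrite natz coprimezXl.
have /andP := dvdz_ldet dc dd; rewrite !Gauss_dvdzr // => -[da db].
have : (p%:R ^+ m.+1 %| gcdz a b)%Z by rewrite dvdz_gcd da.
by rewrite zlogn_dvd // ltnn.
Qed.

Lemma zlogn_prod_lform_min s :
  {in s, forall c, lform c.1 a b != 0 -> zlogn p (lform c.1 a b) <= m}%N ->
  prod_lform s a b != 0 -> zlogn p (prod_lform s a b) = (m * \sum_(c <- s) c.2)%N.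
Proof.
elim: s => [|c s IH] hs; first by rewrite prod_lform_nil big_nil muln0 /zlogn logn1.
rewrite prod_lform_cons mulf_eq0 negb_or => /andP[c0 s0].
rewrite zlognM // zlognX big_cons mulnDr mulnC IH // => [|c' c's]; last first.
  by apply: hs; rewrite inE c's orbT.
congr (_ + _)%N; have [->|e_gt0] := posnP c.2; first by rewrite !muln0.
have L0 : lform c.1 a b != 0 by move: c0; rewrite expf_eq0 e_gt0.
by congr (_ * _)%N; apply/eqP; rewrite eqn_leq hs ?mem_head // zlogn_lform_ge.
Qed.

Lemma zlogn_prod_lform s : pairwise (fun c d => coprimez p (ldet c.1 d.1)) s ->
  prod_lform s a b != 0 ->
  exists2 e : nat, e \in 0%N :: [seq c.2 | c <- s] &
    exists k, zlogn p (prod_lform s a b) = (m * \sum_(c <- s) c.2 + e * k)%N.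
Proof.
elim: s => [|c s IH].
  exists 0%N; rewrite ?mem_head //; exists 0%N.
  by rewrite prod_lform_nil big_nil !muln0 /zlogn logn1.
rewrite pairwise_cons prod_lform_cons mulf_eq0 negb_or => /andP[cs ps] /andP[c0 s0].
rewrite zlognM // zlognX big_cons mulnDr.
have [small|/andP[L0 big]] : (c.2 * zlogn p (lform c.1 a b) = m * c.2)%N \/
    (lform c.1 a b != 0) && (m < zlogn p (lform c.1 a b))%N.
- have [->|e_gt0] := posnP c.2; first by left; rewrite muln0.
  have L0 : lform c.1 a b != 0 by move: c0; rewrite expf_eq0 e_gt0.
  have [le|gt] := leqP (zlogn p (lform c.1 a b)) m; last by right; rewrite L0.
  by left; rewrite mulnC; congr (_ * _)%N; apply/eqP; rewrite eqn_leq le zlogn_lform_ge.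
- have [e he [k ->]] := IH ps s0; exists e.
    by move: he; rewrite !inE => /orP[->|->]; rewrite ?orbT.
  by exists k; rewrite small addnA.
- exists c.2; first by rewrite !inE eqxx orbT.
  exists (zlogn p (lform c.1 a b) - m)%N; rewrite zlogn_prod_lform_min //.
    have le : (c.2 * m <= c.2 * zlogn p (lform c.1 a b))%N by rewrite leq_mul2l ltnW ?orbT.
    by rewrite mulnBr (mulnC m c.2) -addnA addnCA subnKC // addnC.
  move=> c' c's L'0; have := zlogn_lform_pair (allP cs c' c's) L0 L'0.
  by rewrite leqNgt big.
Qed.

End IndependentForms.

Definition Fform_factors : seq (int * int * nat) :=
  [:: (0, 1, 15%N); (1, 0, 10%N); (1, -1, 15%N); (1, -2, 6%N); (1, -3, 24%N); (1, -6, 20%N)].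

Definition Fform (R : pzRingType) (x y : R) : R := prod_lform Fform_factors x y.

Definition two_of_235 (N : nat) : bool := [|| 6 %| N, 10 %| N | 15 %| N]%N.

Lemma two_of_235S N : two_of_235 N -> ~~ two_of_235 N.+1.
Proof. rewrite /two_of_235; lia. Qed.

Lemma prime_coprimez_lt q k : prime q -> (0 < `|k| < q)%N -> coprimez q k.
Proof.
move=> pq /andP[k0 kq]; rewrite coprimezE /= prime_coprime //.
by apply: contraTN kq => /(dvdn_leq k0); rewrite -leqNgt.
Qed.

Lemma Fform_factors_indep q : prime q -> (6 < q)%N ->
  pairwise (fun c d => coprimez q (ldet c.1 d.1)) Fform_factors.
Proof.
move=> pq q6; apply: (@sub_pairwise _ (fun c d => 0 < `|ldet c.1 d.1| <= 6)%N) => //.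
by move=> c d /andP[d0 d6]; apply: prime_coprimez_lt; rewrite // d0 (leq_ltn_trans d6).
Qed.

Lemma two_of_235_zlogn_Fform q a b : prime q -> (6 < q)%N -> Fform a b != 0 ->
  two_of_235 (zlogn q (Fform a b)).
Proof.
move=> pq q6 F0; have [e he [k ->]] := zlogn_prod_lform pq (Fform_factors_indep pq q6) F0.
have -> : (\sum_(c <- Fform_factors) c.2)%N = 90%N by rewrite !big_cons big_nil.
by move: he; rewrite /two_of_235 !inE /=; nia.
Qed.

Lemma Fform_ratio_not_near_q q a b c d : prime q -> (6 < q)%N -> Fform c d != 0 ->
  ~ padic_abs q ((Fform a b)%:~R / (Fform c d)%:~R - q%:R) < q%:R ^- 1.
Proof.
move=> pq q6 F0 /(zlogn_ratio_near_p pq F0) v.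
have F0' : Fform a b != 0 by apply: contra_eq_neq v => ->; rewrite zlogn0.
by have := two_of_235S (two_of_235_zlogn_Fform pq q6 F0); rewrite -v two_of_235_zlogn_Fform.
Qed.

Definition oddz (z : int) : bool := ~~ (2 %| z)%Z.

Lemma oddz_neq0 z : oddz z -> z != 0.
Proof. by apply: contraTneq => ->; rewrite /oddz dvdz0. Qed.

Lemma oddzM x y : oddz (x * y) = oddz x && oddz y.
Proof. by rewrite /oddz !dvdzE abszM Euclid_dvdM // negb_or. Qed.

Lemma oddzX x n : oddz (x ^+ n) = (n == 0%N) || oddz x.
Proof. by rewrite /oddz !dvdzE abszX Euclid_dvdX // negb_and -eqn0Ngt orbC. Qed.

Lemma oddzDl x y : (2 %| x)%Z -> oddz (x + y) = oddz y.
Proof. by move=> ex; rewrite /oddz rpredDl. Qed.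

Lemma oddzMDl k x y : (2 %| k)%Z -> oddz (k * x + y) = oddz y.
Proof. by move=> ek; rewrite oddzDl // dvdz_mulr. Qed.

Lemma oddz_dvdB1 z : oddz z -> (2 %| z - 1)%Z.
Proof.
move=> oz; have := divz_eq z 2; have := modz_ge0 z (isT : (2 : int) != 0).
have := ltz_pmod z (isT : (0 : int) < 2).
have : (z %% 2)%Z != 0 by apply: contra oz => /eqP/dvdz_mod0P.
by move=> r0 r2 r_ge0 ez; apply/dvdzP; exists (z %/ 2)%Z; lia.
Qed.

Lemma eqz_modW d e x y : (d %| e)%Z -> (x = y %[mod e])%Z -> (x = y %[mod d])%Z.
Proof.
move=> de /eqP; rewrite eqz_mod_dvd => dxy.
by apply/eqP; rewrite eqz_mod_dvd (dvdz_trans de dxy).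
Qed.

Lemma eqz_modM d x1 x2 y1 y2 : (x1 = y1 %[mod d])%Z -> (x2 = y2 %[mod d])%Z ->
  (x1 * x2 = y1 * y2 %[mod d])%Z.
Proof. by move=> h1 h2; rewrite -modzMm h1 h2 modzMm. Qed.

Lemma modzMDX d u c e : ((u * d + c) ^+ e = c ^+ e %[mod d])%Z.
Proof. by rewrite -modzXm modzMDl modzXm. Qed.

Lemma oddz_mod x y K : (0 < K)%N -> (x = y %[mod 2 ^+ K])%Z -> oddz x = oddz y.
Proof.
move=> K0 /eqP; rewrite eqz_mod_dvd => dxy; rewrite -(subrK y x) oddzDl //.
by apply: dvdz_trans dxy; rewrite -(prednK K0) exprS dvdz_mulr.
Qed.

Lemma oddz_exp_pow2 z K : oddz z -> (z ^+ (2 ^ K) = 1 %[mod 2 ^+ K.+1])%Z.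
Proof.
move=> oz; apply/eqP; rewrite eqz_mod_dvd; elim: K => [|K IH].
  by rewrite !expr1 oddz_dvdB1.
set w := z ^+ (2 ^ K) in IH *.
have -> : z ^+ (2 ^ K.+1) - 1 = (w - 1) * ((w - 1) + 2).
  by rewrite expnS mulnC exprM -/w; ring.
rewrite exprS mulrC dvdz_mul // rpredD // (dvdz_trans _ IH) // exprS dvdz_mulr //.
Qed.

Lemma oddz_exp_modn z n K : oddz z -> (z ^+ n = z ^+ (n %% 2 ^ K) %[mod 2 ^+ K])%Z.
Proof.
move=> oz; have z1 : (z ^+ (2 ^ K) = 1 %[mod 2 ^+ K])%Z.
  by apply: eqz_modW (oddz_exp_pow2 K oz); rewrite exprS dvdz_mull.
rewrite {1}(divn_eq n (2 ^ K)) exprD mulnC exprM.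
by rewrite -modzMml -modzXm z1 modzXm expr1n modzMml mul1r.
Qed.

Lemma oddz_inv_mod K z : oddz z -> exists2 z', oddz z' & (z * z' = 1 %[mod 2 ^+ K])%Z.
Proof.
move=> oz; exists (z ^+ (2 ^ K).-1); first by rewrite oddzX oz orbT.
by rewrite -exprS prednK ?expn_gt0 // oddz_exp_modn // modnn expr0.
Qed.

Lemma oddz_root_mod K e w : odd e -> oddz w ->
  exists2 h, oddz h & (h ^+ e = w %[mod 2 ^+ K])%Z.
Proof.
move=> oe ow; exists (w ^+ (e ^ (2 ^ K).-1)); first by rewrite oddzX ow orbT.
have e1 : (e ^ 2 ^ K = 1 %[mod 2 ^ K])%N.
  have oe' : oddz e%:Z by rewrite /oddz dvdzE /= dvdn2 oe.
  have := eqz_modW (dvdz_exp2l 2 (leqnSn K)) (oddz_exp_pow2 K oe').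
  by rewrite -!natz -!natrX !natz !modz_nat => -[].
by rewrite -exprM -expnSr prednK ?expn_gt0 // oddz_exp_modn // e1 -oddz_exp_modn.
Qed.

Lemma Fform_dehom (t : int) :
  Fform t 1 = t ^+ 10 * (t - 1) ^+ 15 * (t - 2) ^+ 6 * (t - 3) ^+ 24 * (t - 6) ^+ 20.
Proof. by rewrite /Fform /prod_lform !big_cons big_nil !lformE /=; ring. Qed.

Lemma Fform_even_family j :
  exists2 Q, oddz Q & Fform (8 * 2 ^+ j + 2) 1 = 2 ^+ (68 + 6 * j) * Q.
Proof.
set u := 2 ^+ j.
exists ((4 * u + 1) ^+ 10 * (8 * u + 1) ^+ 15 * (8 * u - 1) ^+ 24 * (2 * u - 1) ^+ 20).
  by rewrite 3!oddzM 4!oddzX /= !oddzMDl.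
by rewrite Fform_dehom exprD mulnC exprM -/u; ring.
Qed.

Lemma Fform_odd_family j :
  exists2 Q, oddz Q & Fform (4 * 2 ^+ j + 3) 1 = 2 ^+ (63 + 24 * j) * Q.
Proof.
set u := 2 ^+ j.
exists ((4 * u + 3) ^+ 10 * (2 * u + 1) ^+ 15 * (4 * u + 1) ^+ 6 * (4 * u - 3) ^+ 20).
  by rewrite 3!oddzM 4!oddzX /= !oddzMDl.
by rewrite Fform_dehom exprD mulnC exprM -/u; ring.
Qed.

Lemma Fform_flexible_family K i c : (0 < K <= i)%N -> oddz c ->
  exists a P, Fform a 1 = 2 ^+ (39 + 15 * i) * P /\ (P = c %[mod 2 ^+ K])%Z.
Proof.
move=> /andP[K0 Ki] oc.
have [u ou u_inv] : exists2 u, oddz u & (5 ^+ 20 * u = 1 %[mod 2 ^+ K])%Z.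
  by apply: oddz_inv_mod; rewrite oddzX.
have [h oh h_root] : exists2 h, oddz h & (h ^+ 15 = c * u %[mod 2 ^+ K])%Z.
  by apply: oddz_root_mod; rewrite ?oddzM ?oc.
pose pi : int := 2 ^+ i.
pose P0 := (2 * h * pi + 1) ^+ 10 * (2 * h * pi - 1) ^+ 6 * (h * pi - 1) ^+ 24 *
  (2 * h * pi - 5) ^+ 20.
exists (2 * h * pi + 1), (h ^+ 15 * P0); split.
  by rewrite Fform_dehom exprD mulnC exprM -/pi /P0; ring.
have P0_mod : (P0 = 5 ^+ 20 %[mod 2 ^+ K])%Z.
  apply: (eqz_modW (dvdz_exp2l 2 Ki)); rewrite -/pi.
  have -> : (5 : int) ^+ 20 = 1 ^+ 10 * (-1) ^+ 6 * (-1) ^+ 24 * (-5) ^+ 20 by ring.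
  by rewrite /P0; apply: eqz_modM; [apply: eqz_modM; [apply: eqz_modM|]|]; rewrite modzMDX.
have -> : (c = c * u * 5 ^+ 20 %[mod 2 ^+ K])%Z.
  by rewrite -mulrA [u * _]mulrC -modzMmr u_inv modzMmr mulr1.
exact: eqz_modM.
Qed.

(* A / B has valuation V and odd part congruent to X / Y modulo 2^K. *)
Definition two_adic_approx (V : int) (K : nat) (X Y A B : int) : Prop :=
  exists (al be : nat) (P Q : int), [/\ A = 2 ^+ al * P, B = 2 ^+ be * Q, oddz (P * Q),
    al%:Z - be%:Z = V & (P * Y = Q * X %[mod 2 ^+ K])%Z].

Lemma two_adic_approx_sym V K X Y A B :
  two_adic_approx V K X Y A B -> two_adic_approx (- V) K Y X B A.
Proof.
case=> al [be [P [Q [eA eB oPQ eV PQ]]]].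
exists be, al, Q, P; split => //; first by rewrite mulrC.
by rewrite -eV opprB.
Qed.

Lemma two_adic_approx_neq0 V K X Y A B : two_adic_approx V K X Y A B -> B != 0.
Proof.
case=> al [be [P [Q [_ -> + _ _]]]]; rewrite oddzM => /andP[_ oQ].
by rewrite mulf_neq0 ?expf_neq0 ?(oddz_neq0 oQ).
Qed.

Lemma two_adic_approx_close V K k X Y A B a0 b0 : oddz Y ->
  a0%:Z - b0%:Z = V -> k%:Z <= V + K%:Z -> two_adic_approx V K X Y A B ->
  padic_abs 2 (A%:~R / B%:~R - (2 ^+ a0 * X)%:~R / (2 ^+ b0 * Y)%:~R) <= 2%:R ^- k.
Proof.
move=> oY eV kV [al [be [P [Q [-> -> /[!oddzM] /andP[_ oQ] eVab PQ]]]]].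
pose g := (al + b0)%N; have eg : (a0 + be)%N = g by rewrite /g; lia.
have Y0 := oddz_neq0 oY; have Q0 := oddz_neq0 oQ.
have -> : (2 ^+ al * P)%:~R / (2 ^+ be * Q)%:~R - (2 ^+ a0 * X)%:~R / (2 ^+ b0 * Y)%:~R
    = (2 ^+ g * (P * Y - Q * X))%:~R / (2 ^+ (be + b0) * (Q * Y))%:~R :> rat.
  rewrite mulrBr {1}/g -eg !exprD !intrM intrB !intrM.
  by field; rewrite !intr_eq0 ?expf_neq0 ?Y0 ?Q0.
apply: padic_abs_ratio_le; rewrite ?mulf_neq0 ?expf_neq0 //.
have oQY : oddz (Q * Y) by rewrite oddzM oQ oY.
rewrite zlogn_pexpM //.
apply: dvdz_trans (_ : 2 ^+ (g + K) %| _)%Z; first by apply: dvdz_exp2l; rewrite /g; lia.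
by rewrite exprD dvdz_mul // -eqz_mod_dvd PQ.
Qed.

Lemma Fform_approx_of_family V K X Y b be Q i : (0 < K <= i)%N ->
  oddz X -> oddz Y -> oddz Q -> Fform b 1 = 2 ^+ be * Q ->
  (39 + 15 * i)%N%:Z - be%:Z = V ->
  exists a, two_adic_approx V K X Y (Fform a 1) (Fform b 1).
Proof.
move=> Ki oX oY oQ eB eV; have K0 : (0 < K)%N by case/andP: Ki.
have [Y' oY' YY'] := oddz_inv_mod K oY.
have oc : oddz (Q * X * Y') by rewrite !oddzM oQ oX oY'.
have [a [P [eA PQ]]] := Fform_flexible_family Ki oc.
exists a, (39 + 15 * i)%N, be, P, Q; split => //.
  by rewrite oddzM (oddz_mod K0 PQ) oc oQ.
by rewrite -modzMml PQ modzMml -mulrA -modzMmr (mulrC Y') YY' modzMmr mulr1.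
Qed.

Lemma Fform_two_adic_approx V K X Y : (0 < K)%N -> oddz X -> oddz Y ->
  exists a b, two_adic_approx V K X Y (Fform a 1) (Fform b 1).
Proof.
move=> K0.
suff base W X' Y' : (W %% 3)%Z != 2 -> oddz X' -> oddz Y' ->
    exists a b, two_adic_approx W K X' Y' (Fform a 1) (Fform b 1).
  move=> oX oY; have [V2|V2] := eqVneq (V %% 3)%Z 2; last exact: base.
  have N2 : ((- V) %% 3)%Z != 2 by rewrite -modzNm V2.
  have [a [b ab]] := base (- V) Y X N2 oY oX.
  by exists b, a; rewrite -[V]opprK; apply: two_adic_approx_sym.
move=> W2 oX oY; have := divz_eq W 3; have := modz_ge0 W (isT : (3 : int) != 0).
have := ltz_pmod W (isT : (0 : int) < 3); set c := (W %/ 3)%Z; set r := (W %% 3)%Z.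
move=> r3 r0 eW; pose t := (`|c|%N + K + 10)%N.
have [r_0|r_1] : r = 0 \/ r = 1 by lia.
- pose j := absz (5 * t%:Z - 2 * (c + 8))%R; pose i := absz (8 * t%:Z - 3 * (c + 8))%R.
  have [Q oQ eB] := Fform_odd_family j.
  have [a ab] : exists a, two_adic_approx W K X' Y' (Fform a 1) (Fform (4 * 2 ^+ j + 3) 1).
    by apply: (Fform_approx_of_family (i := i) _ oX oY oQ eB); rewrite /i /j /t; lia.
  by exists a, (4 * 2 ^+ j + 3).
- pose j := absz (5 * t%:Z + 2 * (c + 10))%R; pose i := absz (2 * t%:Z + (c + 10))%R.
  have [Q oQ eB] := Fform_even_family j.
  have [a ab] : exists a, two_adic_approx W K X' Y' (Fform a 1) (Fform (8 * 2 ^+ j + 2) 1).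
    by apply: (Fform_approx_of_family (i := i) _ oX oY oQ eB); rewrite /i /j /t; lia.
  by exists a, (8 * 2 ^+ j + 2).
Qed.

Lemma exists_exp2_inv_lt (R : archiRealFieldType) (eps : R) : 0 < eps ->
  exists N : nat, 2 ^- N < eps.
Proof.
move=> eps0; exists (Num.Def.archi_bound eps^-1).
set N := Num.Def.archi_bound _.
have ltN : eps^-1 < N%:R by apply: archi_boundP; rewrite invr_ge0 ltW.
rewrite invf_plt ?posrE ?exprn_gt0 //; apply: (lt_le_trans ltN).
by rewrite -natrX ler_nat ltnW // ltn_expl.
Qed.

Lemma Fform_ratio_dense2 (x eps : rat) : 0 < eps -> exists a b,
  Fform b 1 != 0 /\ padic_abs 2 ((Fform a 1)%:~R / (Fform b 1)%:~R - x) < eps.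
Proof.
move=> eps0; have [N ltN] := exists_exp2_inv_lt eps0.
have [->|x0] := eqVneq x 0.
  have [Q oQ eB] := Fform_odd_family 0; exists 0, (4 * 2 ^+ 0 + 3); split.
    by rewrite eB mulf_neq0 ?expf_neq0 ?(oddz_neq0 oQ).
  by rewrite Fform_dehom expr0n /= !mul0r subr0 /padic_abs eqxx.
have nx0 : numq x != 0 by rewrite numq_eq0.
have [X oX eX] := zlogn_decomp (isT : prime 2) nx0.
have [Y oY eY] := zlogn_decomp (isT : prime 2) (denq_neq0 x).
set a0 := zlogn 2 (numq x) in eX; set b0 := zlogn 2 (denq x) in eY.
have [a [b ab]] := @Fform_two_adic_approx (a0%:Z - b0%:Z) (N + `|a0%:Z - b0%:Z|).+1 X Y
  isT oX oY.
exists a, b; split; first exact: two_adic_approx_neq0 ab.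
apply: le_lt_trans ltN; rewrite -[x]divq_num_den eX eY.
by apply: two_adic_approx_close oY erefl _ ab; lia.
Qed.

Unset Implicit Arguments.

Theorem theorem1p7 (n : nat) (hn : (0 < n)%N) :
  exists (F : {mpoly int[n]}) (p M : nat),
    [/\ (1 < n)%N -> exists d : nat, F \is d.-homog,
        prime p,
        (0 < M)%N,
        dense_in_Qp p (ratio_set F)
      & forall q : nat, prime q -> (M < q)%N -> ~ dense_in_Qp q (ratio_set F)].
Proof.
pose v (a : int) (i : 'I_n) : int := if val i == 0%N then a else 1.
pose X0 : {mpoly int[n]} := 'X_(Ordinal hn).
have [Y0 Y0_homog Y0_v] : exists2 Y0 : {mpoly int[n]},
    (1 < n)%N -> Y0 \is 1.-homog & forall a, Y0.@[v a] = 1.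
  have [n1|n1] := ltnP 1 n; last by exists 1 => [|a]; rewrite ?meval1 // ltnNge n1.
  by exists 'X_(Ordinal n1) => [_|a]; rewrite ?dhomogX /= ?mdeg1 ?mevalXU.
have evalF w : (Fform X0 Y0).@[w] = Fform X0.@[w] Y0.@[w] by apply: rmorph_prod_lform.
exists (Fform X0 Y0), 2%N, 6%N; split => //.
- move=> n1; exists (1 * \sum_(c <- Fform_factors) c.2)%N.
  by apply: prod_lform_homog (Y0_homog n1); rewrite dhomogX /= mdeg1.
- move=> x eps eps0; have [a [b [Fb0 close]]] := Fform_ratio_dense2 x eps0.
  exists ((Fform a 1)%:~R / (Fform b 1)%:~R) => //.
  by exists (v a), (v b); rewrite !evalF /X0 !mevalXU !Y0_v.
- move=> q pq q6 /(_ q%:R (q%:R ^- 1)) [].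
    by rewrite invr_gt0 exprn_gt0 // ltr0n prime_gt0.
  move=> _ [w [w' [Fw' ->]]]; rewrite !evalF in Fw' *.
  exact: Fform_ratio_not_near_q.
Qed.
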